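(* Let $n\ge 1$, let $\mathbf S=\{(\mathbf q_1,v_1),\ldots,(\mathbf q_m,v_m)\}$ be a finite multiset of queries and let $\mathbf Q=(\mathbf q,v)$ be a query, where $\mathbf q,\mathbf q_j\in\mathbb R^n$ and $v,v_j\in[0,\infty)$. The following are equivalent: (1) $\mathbf Q$ is linearly answerable from $\mathbf S$; (2) $\mathbf S\rightarrow\mathbf Q$; (3) there exist $c_1,\ldots,c_m\in\mathbb R$ such that $c_1\mathbf q_1+\cdots+c_m\mathbf q_m=\mathbf q$ and $c_1^2v_1+\cdots+c_m^2v_m\le v$.
   Context: A database is a vector $\mathbf x\in\mathbb R^n$. A linear query is a vector $\mathbf q\in\mathbb R^n$, with exact answer $\mathbf q(\mathbf x)=\mathbf q\cdot\mathbf x=\sum_i q_ix_i$. A query is a pair $\mathbf Q=(\mathbf q,v)$ with $\mathbf q$ a linear query and $v\ge 0$ a variance bound. A mechanism $\mathcal K$ assigns to each database $\mathbf x$ a real random variable $\mathcal K(\mathbf x)$; it answers $\mathbf Q=(\mathbf q,v)$ if for every database $\mathbf x$, $\mathbb E[\mathcal K(\mathbf x)]=\mathbf q(\mathbf x)$ and $\mathrm{Var}[\mathcal K(\mathbf x)]\le v$. Distinct queries are answered with independent randomness. $\mathbf Q$ is answerable from the multiset $\{\mathbf Q_1,\ldots,\mathbf Q_k\}$ if there is a function $f:\mathbb R^k\to\mathbb R$ such that for all mechanisms $\mathcal K_1,\ldots,\mathcal K_k$ answering $\mathbf Q_1,\ldots,\mathbf Q_k$ respectively (with $\mathcal K_1(\mathbf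 x),\ldots,\mathcal K_k(\mathbf x)$ mutually independent), the mechanism $\mathbf x\mapsto f(\mathcal K_1(\mathbf x),\ldots,\mathcal K_k(\mathbf x))$ answers $\mathbf Q$; it is linearly answerable if such an $f$ can be chosen linear. The determinacy relation $\mathbf S\rightarrow\mathbf Q$ between finite multisets of queries and queries is the smallest relation satisfying: (Summation) for every $k\ge 0$, $\{(\mathbf q_1,v_1),\ldots,(\mathbf q_k,v_k)\}\rightarrow(\mathbf q_1+\cdots+\mathbf q_k,\,v_1+\cdots+v_k)$; (Scalar multiplication) for every $c\in\mathbb R$, $\{(\mathbf q,v)\}\rightarrow(c\mathbf q,c^2v)$; (Relaxation) $\{(\mathbf q,v)\}\rightarrow(\mathbf q,v')$ whenever $v\le v'$; (Transitivity) if $\mathbf S_1\rightarrow\mathbf Q_1,\ldots,\mathbf S_k\rightarrow\mathbf Q_k$ and $\{\mathbf Q_1,\ldots,\mathbf Q_k\}\rightarrow\mathbf Q$, then the multiset union $\mathbf S_1\uplus\cdots\uplus\mathbf S_k\rightarrow\mathbf Q$. *)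

From HB Require Import structures.
From mathcomp Require Import all_boot all_order all_algebra.
From mathcomp Require Import all_classical all_reals all_analysis.
Set Implicit Arguments. Unset Strict Implicit. Unset Printing Implicit Defensive.
Import Order.TTheory GRing.Theory Num.Theory.
Local Open Scope classical_set_scope.
Local Open Scope ring_scope.

(* A database is x : 'rV[R]_n, a linear query is q : 'rV[R]_n,
   with exact answer q(x) = sum_i q_i x_i. *)
Definition qans (R : realType) (n : nat) (q x : 'rV[R]_n) : R :=
  \sum_(i < n) q 0 i * x 0 i.

(* A query is a pair (q, v) : linear query and variance bound. *)
Definition query (R : realType) (n : nat) := ('rV[R]_n * R)%type.

Definition answers (R : realType) (n : nat) d (T : measurableType d)
  (P : probability T R) (q : 'rV[R]_n) (v : R) (K : 'rV[R]_n -> T -> R) : Prop :=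
  forall x : 'rV[R]_n,
    [/\ measurable_fun setT (K x),
        P.-integrable setT (EFin \o K x),
        ('E_P[K x] = (qans q x)%:E)%E
      & ('V_P[K x] <= v%:E)%E].

Definition mutually_independent (R : realType) d (T : measurableType d)
  (P : probability T R) (k : nat) (X : 'I_k -> T -> R) : Prop :=
  forall B : 'I_k -> set R, (forall i, measurable (B i)) ->
    P (\big[setI/setT]_(i < k) (X i @^-1` B i)) =
    (\prod_(i < k) P (X i @^-1` B i))%E.

Definition linearly_answerable (R : realType) (n m : nat)
  (qs : 'I_m -> 'rV[R]_n) (vs : 'I_m -> R) (q : 'rV[R]_n) (v : R) : Prop :=
  exists c : 'I_m -> R,
    forall (d : measure_display) (T : measurableType d) (P : probability T R)
           (K : 'I_m -> 'rV[R]_n -> T -> R),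
      (forall i, answers P (qs i) (vs i) (K i)) ->
      (forall x, mutually_independent P (fun i => K i x)) ->
      answers P q v (fun x w => \sum_(i < m) c i * K i x w).

(* Finite multisets of queries are
   represented by sequences; the constructor det_perm makes the relation
   depend only on the multiset (the sequence up to permutation). *)
Inductive determines (R : realType) (n : nat) : seq (query R n) -> query R n -> Prop :=
| det_sum : forall s : seq (query R n),
    determines s (\sum_(p <- s) p.1, \sum_(p <- s) p.2)
| det_scale : forall (q : 'rV[R]_n) (v c : R),
    determines [:: (q, v)] (c *: q, c ^+ 2 * v)
| det_relax : forall (q : 'rV[R]_n) (v v' : R), v <= v' ->
    determines [:: (q, v)] (q, v')
| det_trans : forall (l : seq (seq (query R n) * query R n)) (Q : query R n),
    (forall p, p \in l -> determines p.1 p.2) ->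
    determines (map snd l) Q ->
    determines (flatten (map fst l)) Q
| det_perm : forall (s s' : seq (query R n)) (Q : query R n),
    perm_eq s s' -> determines s Q -> determines s' Q.

From HB Require Import structures.
From mathcomp Require Import all_boot all_order all_algebra.
From mathcomp Require Import all_classical all_reals all_analysis.
From mathcomp Require Import measurable_realfun.
Set Implicit Arguments.
Unset Strict Implicit.
Unset Printing Implicit Defensive.

Import Order.TTheory GRing.Theory Num.Theory.
Local Open Scope classical_set_scope.
Local Open Scope ring_scope.

(* The determinacy rules only ever produce queries (sum c_j q_j, v') with
   v' >= sum c_j^2 v_j, and conversely scaling each (q_j, v_j) by c_j, summing
   and relaxing realises any such query; so (2) <-> (3).  For (3) -> (1), the
   combination sum c_j K_j of independent answers has mean sum c_j q_j(x) and
   variance sum c_j^2 Var(K_j) <= sum c_j^2 v_j, independence killing the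
   covariances.  For (1) -> (3), feed the linear answerer the mechanisms
   K_j(x) = q_j(x) + sqrt(v_j) Z_j with independent uniform signs Z_j: their
   variances are exactly v_j, and the mean of the combination, as a function of
   the database, pins down sum c_j q_j. *)

Section independence.
Context d (T : measurableType d) (R : realType) (P : probability T R).
Local Open Scope ereal_scope.

Definition independent2 (X Y : T -> R) := forall A B, measurable A -> measurable B ->
  P (X @^-1` A `&` Y @^-1` B) = P (X @^-1` A) * P (Y @^-1` B).

Lemma mutually_independent2 k (X : 'I_k -> T -> R) :
  mutually_independent P X -> forall i j, i != j -> independent2 (X i) (X j).
Proof.
move=> indX i j ij A B mA mB.
pose Bs l := if l == i then A else if l == j then B else setT.
have mBs l : measurable (Bs l) by rewrite /Bs; case: ifP => // _; case: ifP.
have Bsi : Bs i = A by rewrite /Bs eqxx.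
have Bsj : Bs j = B by rewrite /Bs eq_sym (negbTE ij) eqxx.
have BsT l : (l != i) && (l != j) -> Bs l = setT.
  by case/andP=> li lj; rewrite /Bs (negbTE li) (negbTE lj).
have := indX Bs mBs.
rewrite (bigD1 i) //= (bigD1 j) 1?eq_sym //= [in X in _ = X -> _](bigD1 i) //=.
rewrite [in X in _ = X -> _](bigD1 j) 1?eq_sym //= Bsi Bsj.
rewrite big1 => [|l /BsT ->]; last by rewrite preimage_setT.
rewrite big1 => [|l /BsT ->]; last by rewrite preimage_setT probability_setT.
by rewrite setIT mule1.
Qed.

(* The joint law of independent X and Y is the product of their laws, so
   Fubini splits the integral of x * y. *)
Lemma expectationM_independent (X Y : T -> R) :
  X \in Lfun P 1 -> Y \in Lfun P 1 -> (X * Y)%R \in Lfun P 1 ->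
  independent2 X Y -> 'E_P[X * Y] = 'E_P[X] * 'E_P[Y].
Proof.
move=> X1 Y1 XY1 indXY.
have mX : measurable_fun setT X := set_mem (sub_Lfun_mfun X1).
have mY : measurable_fun setT Y := set_mem (sub_Lfun_mfun Y1).
have mXY : measurable_fun setT (fun w => (X w, Y w)).
  by apply/measurable_fun_pairP; split.
pose Xrv : {RV P >-> R} := HB.pack X (isMeasurableFun.Build _ _ _ _ _ mX).
pose Yrv : {RV P >-> R} := HB.pack Y (isMeasurableFun.Build _ _ _ _ _ mY).
pose XYrv : {RV P >-> (R * R)%type} :=
  HB.pack (fun w => (X w, Y w)) (isMeasurableFun.Build _ _ _ _ _ mXY).
pose mu := distribution P Xrv; pose nu := distribution P Yrv.
have lawXY A : measurable A -> (mu \x nu) A = distribution P XYrv A.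
  by apply: product_measure_unique => A1 A2 mA1 mA2; exact: indXY.
pose f (z : R * R) := (z.1 * z.2)%:E.
have mf : measurable_fun setT f.
  by apply/measurable_EFinP/measurable_funM; [exact: measurable_fst|exact: measurable_snd].
have fXYint : P.-integrable setT (f \o XYrv) by exact/Lfun1_integrable.
have intf : (mu \x nu).-integrable setT f.
  have : (distribution P XYrv).-integrable setT f.
    by apply: (integrable_pushforward mXY (mu:=P) (D:=setT) mf); rewrite ?preimage_setT.
  case/integrableP=> _ fin; apply/integrableP; split=> //.
  by rewrite (eq_measure_integral (distribution P XYrv)) => // A mA _; exact: lawXY.
have Xint : P.-integrable setT (EFin \o X) by exact/Lfun1_integrable.
have Yint : P.-integrable setT (EFin \o Y) by exact/Lfun1_integrable.
have intEFin (Z : {RV P >-> R}) : P.-integrable setT (EFin \o Z) ->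
    (distribution P Z).-integrable setT EFin.
  move=> Zint; have := integrable_pushforward (mu:=P) (D:=setT) (f:=EFin)
    (measurable_funPT Z) (@EFin_measurable _ setT).
  by rewrite preimage_setT; apply.
have EX : 'E_P[X] = \int[mu]_x x%:E by rewrite unlock (integral_distribution (X:=Xrv)).
have EY : 'E_P[Y] = \int[nu]_y y%:E by rewrite unlock (integral_distribution (X:=Yrv)).
have EXY : 'E_P[X * Y] = \int[mu \x nu]_z f z.
  rewrite (eq_measure_integral (distribution P XYrv)); last by move=> A mA _; exact: lawXY.
  by rewrite unlock (integral_distribution (X:=XYrv)).
rewrite EXY -integral12_prod_meas1 // /fubini_F /f /=.
under eq_integral => x _ do rewrite (integralZl measurableT (intEFin Yrv Yint)).
rewrite -EY -[in LHS](fineK (expectation_fin_num Y1)).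
by rewrite (integralZr measurableT (intEFin Xrv Xint)) -EX fineK // expectation_fin_num.
Qed.

Lemma Lfun2_sqr (X : T -> R) : measurable_fun setT X ->
  \int[P]_x (X x ^+ 2)%:E < +oo -> X \in Lfun P 2%:E.
Proof.
move=> mX fin; rewrite inE; apply/andP; split; first by rewrite inE.
rewrite inE /= /finite_norm unlock /Lnorm; apply: poweR_lty.
under eq_integral => x _ do
  rewrite abse_EFin poweR_EFin powR_mulrn ?normr_ge0 // real_normK ?num_real //.
exact: fin.
Qed.

Lemma Lfun2_variance (X : T -> R) : X \in Lfun P 1 -> 'V_P[X] < +oo -> X \in Lfun P 2%:E.
Proof.
move=> X1 VX.
pose Y := (X \- cst (fine 'E_P[X]))%R.
have mY : measurable_fun setT Y.
  by apply: measurable_funB => //; exact: set_mem (sub_Lfun_mfun X1).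
have Y2 : Y \in Lfun P 2%:E.
  apply: Lfun2_sqr => //; apply: le_lt_trans VX.
  rewrite /variance /Y !unlock le_eqVlt; apply/orP; left; apply/eqP/eq_integral => x _.
  by rewrite expr2.
have -> : X = (Y + cst (fine 'E_P[X]))%R by apply/funext => x; rewrite /Y /= subrK.
by rewrite rpredD ?lee1n // => ?; apply: Lfun_cst.
Qed.

Lemma covariance_independent (X Y : T -> R) : X \in Lfun P 2%:E -> Y \in Lfun P 2%:E ->
  independent2 X Y -> covariance P X Y = 0.
Proof.
move=> X2 Y2 indXY.
have Pfin : P setT \is a fin_num := fin_num_measure P _ measurableT.
have X1 := Lfun_subset12 Pfin X2; have Y1 := Lfun_subset12 Pfin Y2.
have XY1 := Lfun2_mul_Lfun1 X2 Y2.
rewrite covarianceE // expectationM_independent // subee //.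
by rewrite fin_numM // expectation_fin_num.
Qed.

End independence.

Section linear_combination.
Context d (T : measurableType d) (R : realType) (P : probability T R).
Local Open Scope ereal_scope.
Variables (I : eqType) (X : I -> T -> R) (c : I -> R).

Definition lin_comb (s : seq I) := fun w => (\sum_(i <- s) c i * X i w)%R.

Lemma lin_comb_nil : lin_comb [::] = cst 0%R.
Proof. by apply/funext => w; rewrite /lin_comb big_nil. Qed.

Lemma lin_comb_cons a s : lin_comb (a :: s) = ((c a \o* X a) + lin_comb s)%R.
Proof. by apply/funext => w; rewrite /lin_comb big_cons !fctE mulrC. Qed.

Lemma Lfun_lin_comb (r : R) s : (1 <= r)%R -> (forall i, X i \in Lfun P r%:E) ->
  lin_comb s \in Lfun P r%:E.
Proof.
move=> r1 Xr; elim: s => [|a s IH]; first by rewrite lin_comb_nil Lfun_cst.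
by rewrite lin_comb_cons rpredD ?lee_fin // Lfun_scale.
Qed.

Lemma expectation_lin_comb (m : I -> R) s : (forall i, X i \in Lfun P 1) ->
  (forall i, 'E_P[X i] = (m i)%:E) -> 'E_P[lin_comb s] = (\sum_(i <- s) c i * m i)%:E.
Proof.
move=> X1 EX; elim: s => [|a s IH]; first by rewrite lin_comb_nil expectation_cst big_nil.
have s1 : lin_comb s \in Lfun P 1 by exact: (@Lfun_lin_comb 1).
rewrite lin_comb_cons expectationD ?Lfun_scale //.
by rewrite expectationZl // EX IH big_cons EFinD EFinM.
Qed.

Hypothesis X2 : forall i, X i \in Lfun P 2%:E.
Hypothesis covX : forall i j, i != j -> covariance P (X i) (X j) = 0.

Let Pfin : P setT \is a fin_num := fin_num_measure P _ measurableT.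

Lemma covariance_lin_comb Y s : Y \in Lfun P 2%:E ->
  (forall i, i \in s -> covariance P Y (X i) = 0) -> covariance P Y (lin_comb s) = 0.
Proof.
move=> Y2; elim: s => [|a s IH] covY; first by rewrite lin_comb_nil covariance_cst_r.
have s2 : lin_comb s \in Lfun P 2%:E by apply: Lfun_lin_comb; rewrite ?ler1n.
rewrite lin_comb_cons covarianceDr ?Lfun_scale ?ler1n //.
rewrite (covarianceZr _ (Lfun_subset12 Pfin Y2) (Lfun_subset12 Pfin (X2 a))
  (Lfun2_mul_Lfun1 Y2 (X2 a))).
rewrite covY ?mem_head // mule0 add0e IH // => i si.
by rewrite covY // inE si orbT.
Qed.

Lemma variance_lin_comb s : uniq s ->
  'V_P[lin_comb s] = \sum_(i <- s) (c i ^+ 2)%:E * 'V_P[X i].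
Proof.
elim: s => [|a s IH]; first by rewrite lin_comb_nil variance_cst big_nil.
case/andP=> as_ us.
have s2 : lin_comb s \in Lfun P 2%:E by apply: Lfun_lin_comb; rewrite ?ler1n.
rewrite lin_comb_cons varianceD ?Lfun_scale ?ler1n // varianceZ // IH // big_cons.
rewrite covariance_lin_comb ?Lfun_scale ?ler1n ?mule0 ?adde0 // => i si.
rewrite (covarianceZl _ (Lfun_subset12 Pfin (X2 a)) (Lfun_subset12 Pfin (X2 i))
  (Lfun2_mul_Lfun1 (X2 a) (X2 i))) covX ?mule0 //.
by apply: contraNneq as_ => ->.
Qed.

End linear_combination.

Lemma perm_map_lift (A B : eqType) (f : A -> B) (w : seq A) (s : seq B) :
  perm_eq (map f w) s -> exists2 w', perm_eq w w' & map f w' = s.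
Proof.
elim: s w => [|b s IH] w.
  by move/perm_nilP/eqP; rewrite -size_eq0 size_map size_eq0 => /eqP ->; exists [::].
move=> fw_bs; have /mapP[a aw eb] : b \in map f w by rewrite (perm_mem fw_bs) mem_head.
subst b.
have wa := perm_to_rem aw.
have /IH[w' ww' <-] : perm_eq (map f (rem a w)) s.
  by rewrite -(perm_cons (f a)) -[f a :: _]/(map f (a :: _)) -(permPl (perm_map f wa)).
by exists (a :: w'); rewrite // (perm_trans wa) // perm_cons.
Qed.

Lemma map_snd_coeffs (R : realType) (J : eqType) (B : Type) (g : J -> B)
    (r : seq J) (w : seq (R * B)) :
  uniq r -> map snd w = map g r -> exists c : J -> R, w = map (fun j => (c j, g j)) r.
Proof.
elim: r w => [|a r IH] [|[ca b] w] //=; first by exists (fun=> 0).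
case/andP=> ar ur [-> /(IH w ur)[c ->]].
exists (fun j => if j == a then ca else c j); rewrite /= eqxx; congr (_ :: _).
by apply/eq_in_map => j jr; case: eqP => // ja; rewrite -ja jr in ar.
Qed.

Section determinacy.
Variables (R : realType) (n : nat).
Local Notation query := (query R n).

Definition certifies (s : seq query) (Q : query) := exists w : seq (R * query),
  [/\ map snd w = s, \sum_(p <- w) p.1 *: p.2.1 = Q.1
    & \sum_(p <- w) p.1 ^+ 2 * p.2.2 <= Q.2].

Lemma certifies_flatten (l : seq (seq query * query)) (w : seq (R * query)) :
  (forall p, p \in l -> certifies p.1 p.2) -> map snd w = map snd l ->
  exists W : seq (R * query), [/\ map snd W = flatten (map fst l),
    \sum_(p <- W) p.1 *: p.2.1 = \sum_(p <- w) p.1 *: p.2.1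
    & \sum_(p <- W) p.1 ^+ 2 * p.2.2 <= \sum_(p <- w) p.1 ^+ 2 * p.2.2].
Proof.
elim: l w => [|[s Q] l IH] [|[a Q'] w] //= certl; first by exists [::]; rewrite !big_nil.
have certl' p : p \in l -> certifies p.1 p.2 by move=> pl; apply: certl; rewrite inE pl orbT.
case=> -> /(IH w certl')[W [eW sW vW]].
have [u [/= eu su vu]] := certl (s, Q) (mem_head _ _).
exists ([seq (a * p.1, p.2) | p <- u] ++ W); split.
- by rewrite map_cat -map_comp eW -eu.
- rewrite big_cat big_cons big_map sW /= -su scaler_sumr; congr (_ + _).
  by apply: eq_bigr => p _; rewrite scalerA.
- rewrite big_cat big_cons big_map /= lerD //.
  under eq_bigr => p _ do rewrite exprMn -mulrA.
  by rewrite -mulr_sumr ler_wpM2l ?sqr_ge0.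
Qed.

Lemma determines_certifies s Q : determines s Q -> certifies s Q.
Proof.
elim=> {s Q} [s|q v c|q v v' vv'|l Q _ certl _ [w [ew sw vw]]|s s' Q ss' _ [w [ew sw vw]]].
- exists [seq (1, p) | p <- s]; rewrite -map_comp map_id !big_map; split=> //.
    by apply: eq_bigr => p _; rewrite scale1r.
  by under eq_bigr => p _ do rewrite expr1n mul1r.
- by exists [:: (c, (q, v))]; rewrite !big_seq1.
- by exists [:: (1, (q, v))]; rewrite !big_seq1 scale1r expr1n mul1r.
- have [W [eW sW vW]] := certifies_flatten certl ew.
  by exists W; split=> //; [rewrite sW | apply: le_trans vw].
- have [w' ww' ew'] : exists2 w', perm_eq w w' & map snd w' = s'.
    by apply: perm_map_lift; rewrite ew.
  by exists w'; rewrite -!(perm_big _ ww').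
Qed.

Lemma certifies_coeffs m (qs : 'I_m -> 'rV[R]_n) (vs : 'I_m -> R) (q : 'rV[R]_n) (v : R) :
  certifies [seq (qs j, vs j) | j : 'I_m] (q, v) ->
  exists c : 'I_m -> R, \sum_(j < m) c j *: qs j = q /\ \sum_(j < m) c j ^+ 2 * vs j <= v.
Proof.
case=> w [/(map_snd_coeffs (enum_uniq 'I_m))[c ->]].
by rewrite !big_map; exists c.
Qed.

Lemma coeffs_determines m (qs : 'I_m -> 'rV[R]_n) (vs : 'I_m -> R) (q : 'rV[R]_n) (v : R)
    (c : 'I_m -> R) :
  \sum_(j < m) c j *: qs j = q -> \sum_(j < m) c j ^+ 2 * vs j <= v ->
  determines [seq (qs j, vs j) | j : 'I_m] (q, v).
Proof.
move=> sq sv.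
pose scaled j : query := (c j *: qs j, c j ^+ 2 * vs j).
pose l := [seq ([:: (qs j, vs j)], scaled j) | j : 'I_m].
have -> : [seq (qs j, vs j) | j : 'I_m] = flatten (map fst l).
  by rewrite /l /image_mem; elim: (enum _) => //= j r ->.
apply: det_trans => [p /mapP[j _ ->]|]; first exact: det_scale.
have -> : map snd l = flatten (map fst [:: (map snd l, (q, \sum_(j < m) c j ^+ 2 * vs j))]).
  by rewrite /= cats0.
apply: det_trans => [p|]; last exact: det_relax.
rewrite inE => /eqP -> /=.
have -> : q = \sum_(p <- map snd l) p.1 by rewrite -sq /l -map_comp big_map enumT.
rewrite [X in (_, X)](_ : _ = \sum_(p <- map snd l) p.2); first exact: det_sum.
by rewrite /l -map_comp big_map enumT.
Qed.

Lemma determines_iff_coeffs m (qs : 'I_m -> 'rV[R]_n) (vs : 'I_m -> R) (q : 'rV[R]_n) (v : R) :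
  determines [seq (qs j, vs j) | j : 'I_m] (q, v) <->
  exists c : 'I_m -> R, \sum_(j < m) c j *: qs j = q /\ \sum_(j < m) c j ^+ 2 * vs j <= v.
Proof.
split=> [/determines_certifies/certifies_coeffs //|[c [sq sv]]].
exact: coeffs_determines sq sv.
Qed.

End determinacy.

Definition signs (m : nat) := {ffun 'I_m -> bool}.
HB.instance Definition _ m := Finite.on (signs m).
HB.instance Definition _ m := isPointed.Build (signs m) [ffun=> false].
HB.instance Definition _ m := @isMeasurable.Build default_measure_display (signs m)
  discrete_measurable discrete_measurable0 discrete_measurableC discrete_measurableU.

Definition uniform_signs (R : realType) m : set (signs m) -> \bar R :=
  mscale (#|signs m|%:R^-1)%:nng
    (msum (fun k => \d_(nth [ffun=> false] (enum (signs m)) k : signs m)) #|signs m|).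

Arguments uniform_signs : clear implicits.

HB.instance Definition _ R m := Measure.on (uniform_signs R m).

Lemma card_signs m : #|signs m| = (2 ^ m)%N.
Proof. by rewrite card_ffun card_bool card_ord. Qed.

Lemma uniform_signsE (R : realType) m (A : set (signs m)) :
  uniform_signs R m A = (#|signs m|%:R^-1 * \sum_(t : signs m) \1_A t)%:E.
Proof.
rewrite /uniform_signs /mscale /= /msum /= /dirac /= EFinM sumEFin.
congr (_ * (_ : R)%:E)%E; rewrite [RHS](_ : _ = \sum_(t <- enum (signs m)) \1_A t).
  by rewrite (big_nth [ffun=> false]) big_mkord -cardE.
by rewrite enumT.
Qed.

Lemma uniform_signs_setT (R : realType) m : uniform_signs R m setT = 1%E.
Proof.
rewrite uniform_signsE (eq_bigr (fun=> 1)) => [|t _]; last by rewrite indicE in_setT.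
by rewrite sumr_const mulVf // card_signs pnatr_eq0 expn_eq0.
Qed.

HB.instance Definition _ R m :=
  Measure_isProbability.Build _ _ _ (uniform_signs R m) (uniform_signs_setT R m).

Lemma indic_bigsetI (T : Type) (R : pzRingType) (I : Type) (r : seq I) (A : I -> set T) t :
  \1_(\big[setI/setT]_(i <- r) A i) t = \prod_(i <- r) \1_(A i) t :> R.
Proof.
elim: r => [|a r IH]; first by rewrite !big_nil indicE in_setT.
by rewrite !big_cons indicI /= IH.
Qed.

Section uniform_signs.
Variables (R : realType) (m : nat).
Local Notation P := (uniform_signs R m).

Lemma measurable_fun_signs (f : signs m -> R) : measurable_fun setT f.
Proof. by move=> _ Y _. Qed.

Lemma Lfun1_signs (f : signs m -> R) : f \in Lfun P 1.
Proof.
apply/Lfun1_integrable.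
apply: (@le_integrable _ _ _ _ _ measurableT _ (EFin \o cst (\sum_t `|f t|))).
- by apply/measurable_EFinP; exact: measurable_fun_signs.
- move=> t _ /=; rewrite lee_fin [X in _ <= X]ger0_norm ?sumr_ge0 //.
  by rewrite (bigD1 t) //= lerDl sumr_ge0.
- exact: (@finite_measure_integrable_cst _ _ _ P setT _ measurableT).
Qed.

Lemma Lfun2_signs (f : signs m -> R) : f \in Lfun P 2%:E.
Proof.
apply: Lfun2_sqr; first exact: measurable_fun_signs.
by have /Lfun1_integrable/(integrable_lty measurableT) := Lfun1_signs (fun t => f t ^+ 2).
Qed.

Lemma sum_prod_signs (G : 'I_m -> bool -> R) :
  \sum_(t : signs m) \prod_i G i (t i) = \prod_i (G i true + G i false).
Proof.
under [RHS]eq_bigr => i _ do rewrite -big_bool.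
by rewrite bigA_distr_bigA.
Qed.

(* The coordinates of a uniform sign vector are independent fair coins. *)
Lemma uniform_signs_prod (G : 'I_m -> bool -> R) (A : set (signs m)) :
  (forall t, \1_A t = \prod_i G i (t i)) ->
  P A = (\prod_i ((G i true + G i false) / 2))%:E.
Proof.
move=> A_prod; rewrite uniform_signsE (eq_bigr _ (fun t _ => A_prod t)).
rewrite sum_prod_signs card_signs big_split /= mulrC prodr_const card_ord.
by rewrite natrX exprVn.
Qed.

Lemma uniform_signs_coord (i : 'I_m) (b : bool) : P [set t | t i = b] = (2^-1)%:E.
Proof.
pose G j c := if j == i then (c == b)%:R else 1 : R.
have coin j : j != i -> (G j true + G j false) / 2 = 1.
  by move=> /negbTE ji; rewrite /G ji divff // pnatr_eq0.
rewrite (@uniform_signs_prod G) => [|t]; last first.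
  rewrite (bigD1 i) //= big1 => [|j /negbTE ji]; last by rewrite /G ji.
  rewrite /G eqxx mulr1 indicE; congr (nat_of_bool _)%:R.
  by apply/idP/eqP => [/set_mem|/mem_set].
rewrite (bigD1 i) //= big1 ?mulr1 // /G eqxx {coin G}.
by case: b => /=; rewrite ?add0r ?addr0 mul1r.
Qed.

End uniform_signs.

Definition coin_sign (R : realType) m (i : 'I_m) (t : signs m) : R := if t i then 1 else -1.

Definition noisy_answer (R : realType) n m (qs : 'I_m -> 'rV[R]_n) (vs : 'I_m -> R)
    (i : 'I_m) (x : 'rV[R]_n) : signs m -> R :=
  cst (qans (qs i) x) \+ Num.sqrt (vs i) \o* coin_sign R i.

Section noisy_answer.
Variables (R : realType) (n m : nat) (qs : 'I_m -> 'rV[R]_n) (vs : 'I_m -> R).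
Hypothesis vs_ge0 : forall j, 0 <= vs j.
Local Notation P := (uniform_signs R m).
Local Open Scope ereal_scope.

Lemma expectation_coin_sign i : 'E_P[coin_sign R i] = 0.
Proof.
pose side b : set (signs m) := [set t | t i = b].
have -> : coin_sign R i = (\1_(side true) \- \1_(side false))%R.
  apply/funext => t; rewrite /coin_sign /= !indicE.
  have mem_side b : (t \in side b) = (t i == b).
    by apply/idP/eqP => [/set_mem|/mem_set].
  by rewrite !mem_side; case: (t i); rewrite ?subr0 ?sub0r.
rewrite expectationB ?Lfun1_signs // !expectation_indic //.
transitivity ((2^-1)%:E - (2^-1)%:E : \bar R); last by rewrite subee.
by rewrite -{1}(uniform_signs_coord R i true) -(uniform_signs_coord R i false).
Qed.

Lemma variance_coin_sign i : 'V_P[coin_sign R i] = 1.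
Proof.
rewrite /variance covarianceE ?Lfun1_signs // expectation_coin_sign mule0 sube0.
have -> : (coin_sign R i * coin_sign R i)%R = cst 1%R.
  apply/funext => t; rewrite /coin_sign /=.
  change ((if t i then 1 else -1) * (if t i then 1 else -1) = 1 :> R)%R.
  by case: (t i); rewrite ?mulr1 ?mulrNN ?mulr1.
exact: expectation_cst.
Qed.

Lemma variance_noisy_answer i x : 'V_P[noisy_answer qs vs i x] = (vs i)%:E.
Proof.
rewrite varianceD_cst_l ?Lfun2_signs // varianceZ ?Lfun2_signs // variance_coin_sign.
by rewrite mule1 sqr_sqrtr.
Qed.

Lemma answers_noisy_answer i : answers P (qs i) (vs i) (noisy_answer qs vs i).
Proof.
move=> x; split.
- exact: measurable_fun_signs.
- exact/Lfun1_integrable/Lfun1_signs.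
- rewrite expectationD ?Lfun1_signs // expectation_cst expectationZl ?Lfun1_signs //.
  by rewrite expectation_coin_sign mule0 adde0.
- by rewrite variance_noisy_answer.
Qed.

Lemma independent_noisy_answer x :
  mutually_independent P (fun i => noisy_answer qs vs i x).
Proof.
move=> B mB.
pose G i (b : bool) : R :=
  (\1_(B i) (qans (qs i) x + (if b then 1 else -1) * Num.sqrt (vs i)))%R.
transitivity ((\prod_i ((G i true + G i false) / 2))%:E).
  apply: uniform_signs_prod => t.
  by rewrite indic_bigsetI; apply: eq_bigr => i _; rewrite !indicE.
rewrite -prodEFin; apply: eq_bigr => i _; symmetry.
apply: eq_trans (uniform_signs_prod (G := fun j b => if j == i then G i b else 1%R) _) _.
  by move=> t; rewrite (bigD1 i) //= eqxx big1 ?mulr1 ?indicE // => j /negbTE ->.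
congr (_%:E); rewrite (bigD1 i) //= eqxx big1 ?mulr1 // => j /negbTE ->.
by rewrite divff // pnatr_eq0.
Qed.

End noisy_answer.

Section linear_answerability.
Variables (R : realType) (n m : nat) (qs : 'I_m -> 'rV[R]_n) (vs : 'I_m -> R).

Lemma qans_sum (c : 'I_m -> R) x :
  qans (\sum_(i < m) c i *: qs i) x = \sum_(i < m) c i * qans (qs i) x.
Proof.
rewrite /qans; under eq_bigr => k _ do rewrite summxE mulr_suml.
rewrite exchange_big /=; apply: eq_bigr => i _; rewrite mulr_sumr.
by apply: eq_bigr => k _; rewrite mxE mulrA.
Qed.

Lemma qans_inj (p p' : 'rV[R]_n) : (forall x, qans p x = qans p' x) -> p = p'.
Proof.
move=> pp'; apply/rowP => k.
have qans_delta (r : 'rV[R]_n) : qans r (delta_mx 0 k) = r 0 k.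
  rewrite /qans (bigD1 k) //= mxE !eqxx mulr1 big1 ?addr0 // => j jk.
  by rewrite mxE (negbTE jk) andbF mulr0.
by rewrite -!qans_delta pp'.
Qed.

Local Open Scope ereal_scope.

Lemma moments_lin_comb d (T : measurableType d) (P : probability T R)
    (K : 'I_m -> 'rV[R]_n -> T -> R) (c : 'I_m -> R) x :
  (forall i, answers P (qs i) (vs i) (K i)) ->
  mutually_independent P (fun i => K i x) ->
  let Kc := lin_comb (fun i => K i x) c (index_enum 'I_m) in
  [/\ Kc \in Lfun P 2%:E, 'E_P[Kc] = (\sum_(i < m) c i * qans (qs i) x)%:E
    & 'V_P[Kc] = \sum_(i < m) (c i ^+ 2)%:E * 'V_P[K i x]].
Proof.
move=> ansK indK Kc.
have K1 i : K i x \in Lfun P 1 by have [_ /Lfun1_integrable] := ansK i x.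
have K2 i : K i x \in Lfun P 2%:E.
  by have [_ _ _ VK] := ansK i x; apply: Lfun2_variance => //; exact: le_lt_trans VK (ltry _).
split.
- by apply: Lfun_lin_comb; rewrite ?ler1n.
- by apply: expectation_lin_comb => // i; have [] := ansK i x.
- rewrite variance_lin_comb ?index_enum_uniq // => i j ij.
  by apply: covariance_independent => //; apply: (mutually_independent2 indK).
Qed.

Lemma linearly_answerable_iff_coeffs (vs_ge0 : forall j, (0 <= vs j)%R)
    (q : 'rV[R]_n) (v : R) :
  linearly_answerable qs vs q v <->
  exists c : 'I_m -> R,
    (\sum_(j < m) c j *: qs j)%R = q /\ (\sum_(j < m) c j ^+ 2 * vs j <= v)%R.
Proof.
split=> [[c ans_c]|[c [sq sv]]].
- exists c.
  have ans := answers_noisy_answer qs vs_ge0; have ind := independent_noisy_answer qs vs.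
  split.
  + apply: qans_inj => x; rewrite qans_sum.
    have [_ E _] := moments_lin_comb c ans (ind x).
    by have [_ _ + _] := ans_c _ _ _ _ ans ind x; rewrite E => -[].
  + have [_ _ V] := moments_lin_comb c ans (ind 0%R).
    have [_ _ _ +] := ans_c _ _ _ _ ans ind 0%R.
    rewrite V (eq_bigr (fun i => ((c i ^+ 2) * vs i)%:E)) => [|i _].
      by rewrite sumEFin lee_fin.
    by rewrite variance_noisy_answer // EFinM.
- exists c => d T P K ansK indK x.
  have [K2 E V] := moments_lin_comb c ansK (indK x).
  split.
  + exact: set_mem (sub_Lfun_mfun K2).
  + apply/Lfun1_integrable; exact: (Lfun_subset12 (fin_num_measure P _ measurableT) K2).
  + by rewrite E -qans_sum sq.
  + rewrite V; apply: le_trans (_ : _ <= (\sum_(i < m) c i ^+ 2 * vs i)%:E) _; last first.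
      by rewrite lee_fin.
    rewrite -sumEFin; apply: lee_sum => i _; rewrite [leRHS]EFinM.
    by apply: lee_wpmul2l; [rewrite lee_fin sqr_ge0 | have [] := ansK i x].
Qed.

End linear_answerability.

Theorem proposition1 (R : realType) (n m : nat) (Hn : (1 <= n)%N)
  (qs : 'I_m -> 'rV[R]_n) (vs : 'I_m -> R) (q : 'rV[R]_n) (v : R)
  (Hvs : forall j, 0 <= vs j) (Hv : 0 <= v) :
  (linearly_answerable qs vs q v <->
     determines [seq (qs j, vs j) | j : 'I_m] (q, v)) /\
  (determines [seq (qs j, vs j) | j : 'I_m] (q, v) <->
     exists c : 'I_m -> R,
       \sum_(j < m) c j *: qs j = q /\ \sum_(j < m) c j ^+ 2 * vs j <= v).
Proof.
rewrite determines_iff_coeffs; split=> //.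
exact: linearly_answerable_iff_coeffs.
Qed.
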